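(* Assume $V=L$. Let $\zeta\in\Xi$, $X\in\mathrm{IPS}_\zeta$, and let $i\neq j$ be elements of $\zeta$. Then there is $Z\in\mathrm{IPS}_\zeta$ with $Z\subseteq X$, $Z$ clopen in $X$, such that $\{z(i):z\in Z\}\cap\{z(j):z\in Z\}=\varnothing$.
   Context: $T$ is the set of all nonempty finite sequences of countable ordinals, ordered by strict extension $\subset$. $\Xi$ is the set of all at most countable $\xi\subseteq T$ closed downward under $\subset$. $D=2^\omega$; $D^\xi$ is the product of $\xi$ copies of $D$ with the product topology; for $\eta\subseteq\xi$ and $x\in D^\xi$, $x\restriction\eta$ is the restriction. For $\zeta\in\Xi$, $\mathrm{IPS}_\zeta$ is the set of all $X\subseteq D^\zeta$ for which there is a homeomorphism $H$ of $D^\zeta$ onto $X$ such that for all $x_0,x_1\in D^\zeta$ and all $\xi\in\Xi$, $\xi\subseteq\zeta$: $x_0\restriction\xi=x_1\restriction\xi\iff H(x_0)\restriction\xi=H(x_1)\restriction\xi$. *)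

From HB Require Import structures.
From mathcomp Require Import all_boot all_order all_algebra.
From mathcomp Require Import all_classical all_reals all_analysis.
From Stdlib Require Import List.

Set Implicit Arguments.
Unset Strict Implicit.
Unset Printing Implicit Defensive.

Local Open Scope classical_set_scope.

Definition is_wo (D : nat -> Prop) (R : nat -> nat -> Prop) : Prop :=
  (forall x y, R x y -> D x /\ D y) /\
  (forall x, ~ R x x) /\
  (forall x y z, R x y -> R y z -> R x z) /\
  (forall x y, D x -> D y -> x = y \/ R x y \/ R y x) /\
  well_founded R.

Definition wo_iso (D : nat -> Prop) (R : nat -> nat -> Prop)
    (D' : nat -> Prop) (R' : nat -> nat -> Prop) : Prop :=
  exists f : nat -> nat,
    (forall x, D x -> D' (f x)) /\
    (forall y, D' y -> exists x, D x /\ f x = y) /\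
    (forall x y, D x -> D y -> (R x y <-> R' (f x) (f y))).

(* A countable ordinal = the isomorphism class (order type) of a           *)
(* well-ordering of a subset of nat.                                       *)
Definition countable_ordinal : Type :=
  { C : (nat -> Prop) -> (nat -> nat -> Prop) -> Prop |
    exists D R, is_wo D R /\ forall D' R', C D' R' <-> wo_iso D R D' R' }.

Definition T : Type := { s : list countable_ordinal | s <> nil }.

Definition strict_ext (s t : T) : Prop :=
  exists u : list countable_ordinal, u <> nil /\ proj1_sig t = proj1_sig s ++ u.

Definition Xi (xi : set T) : Prop :=
  countable xi /\ (forall s t, strict_ext s t -> xi t -> xi s).

Definition idx (zeta : set T) : Type := { t : T | zeta t }.

Definition Dpow (zeta : set T) : Type :=
  prod_topology (fun _ : idx zeta => cantor_space).

Definition restr_eq (zeta xi : set T) (x0 x1 : Dpow zeta) : Prop :=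
  forall i : idx zeta, xi (proj1_sig i) -> x0 i = x1 i.

Definition homeo_onto (zeta : set T) (H : Dpow zeta -> Dpow zeta)
    (X : set (Dpow zeta)) : Prop :=
  continuous H /\ injective H /\ H @` setT = X /\
  exists G : Dpow zeta -> Dpow zeta,
    {within X, continuous G} /\ (forall x, G (H x) = x).

Definition IPS (zeta : set T) (X : set (Dpow zeta)) : Prop :=
  exists H : Dpow zeta -> Dpow zeta,
    homeo_onto H X /\
    forall (x0 x1 : Dpow zeta) (xi : set T), Xi xi -> xi `<=` zeta ->
      (restr_eq xi x0 x1 <-> restr_eq xi (H x0) (H x1)).

Definition clopen_in (zeta : set T) (X Z : set (Dpow zeta)) : Prop :=
  Z `<=` X /\ @clopen (subspace X) Z.

(* An IPS embedding H cannot identify two coordinates i <> j.  Say j is not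
   below i and compare the constant point false with the point that is true
   exactly at coordinate j: they agree on xi = downset i `|` below j, which lies
   in Xi, so their images agree on xi; if H x i = H x j for every x, the images
   would also agree at j and hence on downset i `|` downset j, forcing the two
   points to agree at j.  So some bit n of H x i and H x j differs, and by
   continuity it still differs on a basic clopen cylinder W around x.  Such a
   cylinder is the image of D^zeta under a coordinatewise homeomorphism that
   prepends the fixed finite prefixes, which preserves all restrictions; hence
   Z := H @` W is in IPS, is clopen in X, and bit n separates its i- and
   j-coordinates.  No set-theoretic hypothesis such as V = L is needed. *)

From HB Require Import structures.
From mathcomp Require Import all_boot all_order all_algebra.
From mathcomp Require Import all_classical all_reals all_analysis.
From Stdlib Require List.

Set Implicit Arguments.
Unset Strict Implicit.
Unset Printing Implicit Defensive.

Local Open Scope classical_set_scope.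

Section ProductTopology.
Context {I : Type} {K : I -> topologicalType}.

Lemma cvg_ptws (F : set_system (prod_topology K)) (f : prod_topology K) :
  Filter F -> (forall i, (fun g => g i) @ F --> f i) -> F --> f.
Proof.
move=> FF Fi; apply/cvg_sup => i U [V] [[W] oW <-] Wf WU.
by apply: (filterS WU); apply: Fi; exact: open_nbhs_nbhs.
Qed.

Lemma continuous_ptws (Y : topologicalType) (h : Y -> prod_topology K) :
  (forall i, continuous (fun y => h y i)) -> continuous h.
Proof. by move=> hi y; apply: cvg_ptws => i; exact: hi. Qed.

Lemma continuous_coord i : continuous (fun g : prod_topology K => g i).
Proof. exact: (@proj_continuous {classic I} K i). Qed.

End ProductTopology.

Arguments continuous_coord {I K} i.

Lemma clopen_list_bigcap (T : topologicalType) (J : Type) (s : list J)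
    (A : J -> set T) :
  (forall k, clopen (A k)) -> clopen [set y | forall k, List.In k s -> A k y].
Proof.
move=> clA; elim: s => [|k s IH].
  rewrite (_ : [set y | _] = setT); first exact: clopenT.
  by apply/seteqP; split => // y _ k [].
rewrite (_ : [set y | _] = A k `&` [set y | forall k, List.In k s -> A k y]).
  exact: clopenI.
apply/seteqP; split => [y Ay|y [Aky Asy] l [<-|ls]] //; last exact: Asy.
by split => [|l ls]; apply: Ay; [left | right].
Qed.

Lemma clopen_prefix_bigcap (T : topologicalType) (m : nat) (A : nat -> set T) :
  (forall b, clopen (A b)) -> clopen [set y | forall b, (b < m)%N -> A b y].
Proof.
move=> clA; elim: m => [|m IH].
  rewrite (_ : [set y | _] = setT); first exact: clopenT.
  by apply/seteqP; split.
rewrite (_ : [set y | _] = [set y | forall b, (b < m)%N -> A b y] `&` A m).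
  exact: clopenI.
apply/seteqP; split => [y Ay|y [Ay Amy] b].
  by split => [b bm|]; apply: Ay; [exact: ltnW | exact: ltnSn].
by rewrite ltnS leq_eqVlt => /orP [/eqP -> //|]; exact: Ay.
Qed.

Lemma continuous_bit (I : Type) (k : I) (b : nat) :
  continuous (fun y : prod_topology (fun _ : I => cantor_space) => y k b).
Proof.
move=> y.
exact: (continuous_comp (continuous_coord k y) (continuous_coord b (y k))).
Qed.

Arguments continuous_bit {I} k b.

Section CantorPower.
Variable I : Type.
Local Notation D := (prod_topology (fun _ : I => cantor_space)).

Definition cylinder (F : list I) (m : nat) (x : D) : set D :=
  [set y | forall k, List.In k F -> forall b, (b < m)%N -> y k b = x k b].

Lemma cylinder_clopen F m x : clopen (cylinder F m x).
Proof.
apply: clopen_list_bigcap => k; apply: clopen_prefix_bigcap => b.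
apply: (@preimage_clopen _ _ (fun y : D => y k b) [set x k b]).
  by split; [exact: discrete_open | exact: discrete_closed].
exact: continuous_bit.
Qed.

Lemma nbhs_cylinder (x : D) (W : set D) :
  nbhs x W -> exists F m, cylinder F m x `<=` W.
Proof.
pose C := filter_from [set: list I * nat] (fun p => cylinder p.1 p.2 x).
have C_filter : Filter C.
  apply: filter_from_filter; first by exists ([::], 0%N).
  move=> [F1 m1] [F2 m2] _ _; exists (F1 ++ F2, maxn m1 m2) => //= y Cy.
  split => k Fk b bm; apply: Cy.
  - by apply/List.in_app_iff; left.
  - by rewrite leq_max bm.
  - by apply/List.in_app_iff; right.
  - by rewrite leq_max bm orbT.
have : C --> x.
  apply: cvg_ptws => k; apply: cvg_ptws => b.
  apply/discrete_cvg; exists ([:: k], b.+1) => //= y Cy.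
  by apply: Cy; [left|].
by move=> /(_ W) CW /CW [[F m] _ FmW]; exists F, m.
Qed.

End CantorPower.

Section PrefixShift.
Variables (m : nat) (p : cantor_space).

Definition prefix_shift (c : cantor_space) : cantor_space :=
  fun b => if (b < m)%N then p b else c (b - m)%N.

Definition prefix_drop (c : cantor_space) : cantor_space := fun b => c (b + m)%N.

Lemma prefix_shiftK : cancel prefix_shift prefix_drop.
Proof.
move=> c; apply/funext => b.
by rewrite /prefix_drop /prefix_shift ltnNge leq_addl addnK.
Qed.

Lemma prefix_dropK c :
  (forall b, (b < m)%N -> c b = p b) -> prefix_shift (prefix_drop c) = c.
Proof.
move=> cp; apply/funext => b; rewrite /prefix_shift /prefix_drop.
by case: ltnP => [/cp //|mb]; rewrite subnK.
Qed.

Lemma prefix_shift_prefix c b : (b < m)%N -> prefix_shift c b = p b.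
Proof. by rewrite /prefix_shift => ->. Qed.

Lemma continuous_prefix_shift : continuous prefix_shift.
Proof.
apply: continuous_ptws => b; rewrite /prefix_shift; case: ltnP => _.
  exact: cst_continuous.
exact: continuous_coord.
Qed.

Lemma continuous_prefix_drop : continuous prefix_drop.
Proof. by apply: continuous_ptws => b; exact: continuous_coord. Qed.

End PrefixShift.

Section CylinderShift.
Variable I : Type.
Local Notation D := (prod_topology (fun _ : I => cantor_space)).

Definition map_coords (g : I -> cantor_space -> cantor_space) (y : D) : D :=
  fun k => g k (y k).

Lemma map_coordsK g h : (forall k, cancel (g k) (h k)) ->
  cancel (map_coords g) (map_coords h).
Proof. by move=> gK y; apply/funext => k; exact: gK. Qed.

Lemma continuous_map_coords g : (forall k, continuous (g k)) ->
  continuous (map_coords g).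
Proof.
move=> gc; apply: continuous_ptws => k y.
exact: (continuous_comp (continuous_coord k y) (gc k (y k))).
Qed.

Variables (F : list I) (m : nat) (x : D).

Definition shift_on (k : I) : cantor_space -> cantor_space :=
  if pselect (List.In k F) then prefix_shift m (x k) else id.

Definition drop_on (k : I) : cantor_space -> cantor_space :=
  if pselect (List.In k F) then prefix_drop m else id.

Lemma shift_onK k : cancel (shift_on k) (drop_on k).
Proof.
by rewrite /shift_on /drop_on; case: pselect => // ?; exact: prefix_shiftK.
Qed.

Lemma continuous_shift_on k : continuous (shift_on k).
Proof.
rewrite /shift_on; case: pselect => ?; first exact: continuous_prefix_shift.
by move=> ?; exact: cvg_id.
Qed.

Lemma continuous_drop_on k : continuous (drop_on k).
Proof.
rewrite /drop_on; case: pselect => ?; first exact: continuous_prefix_drop.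
by move=> ?; exact: cvg_id.
Qed.

Lemma range_shift_on : range (map_coords shift_on) = cylinder F m x.
Proof.
apply/seteqP; split => [_ [y _ <-] k Fk b bm|y Fy].
  rewrite /map_coords /shift_on; case: pselect => // ?.
  exact: prefix_shift_prefix.
exists (map_coords drop_on y) => //; apply/funext => k.
rewrite /map_coords /shift_on /drop_on; case: pselect => // Fk.
exact/prefix_dropK/Fy.
Qed.

End CylinderShift.

Lemma strict_ext_trans (s t u : T) :
  strict_ext s t -> strict_ext t u -> strict_ext s u.
Proof.
move=> [v [v0 tsv]] [w [_ utw]]; exists (v ++ w); split.
  by case: v v0 {tsv}.
by rewrite utw tsv List.app_assoc.
Qed.

Lemma strict_ext_irrefl (s : T) : ~ strict_ext s s.
Proof.
move=> [u [u0 su]]; apply: u0; apply: (@List.app_inv_head _ (proj1_sig s)).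
by rewrite -su List.app_nil_r.
Qed.

Definition down_closed (xi : set T) : Prop :=
  forall s t, strict_ext s t -> xi t -> xi s.

Definition below (t : T) : set T := [set s | strict_ext s t].

Definition downset (t : T) : set T := [set s | s = t \/ strict_ext s t].

Lemma down_closed_below t : down_closed (below t).
Proof. by move=> s u su ut; exact: strict_ext_trans su ut. Qed.

Lemma down_closed_downset t : down_closed (downset t).
Proof. by move=> s u su [<-|ut]; right => //; exact: strict_ext_trans su ut. Qed.

Lemma down_closedU xi xi' :
  down_closed xi -> down_closed xi' -> down_closed (xi `|` xi').
Proof.
by move=> dxi dxi' s t st [xt|xt]; [left; exact: dxi xt | right; exact: dxi' xt].
Qed.

Lemma downset_sub zeta t : Xi zeta -> zeta t -> downset t `<=` zeta.
Proof. by move=> [_ dz] zt s [->|st] //; exact: dz zt. Qed.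

Lemma Xi_sub zeta xi : Xi zeta -> xi `<=` zeta -> down_closed xi -> Xi xi.
Proof.
move=> [cz _] xiz dxi; split => //.
by apply: sub_countable cz; exact: subset_card_le.
Qed.

Lemma idx_inj zeta : injective (@proj1_sig T zeta : idx zeta -> T).
Proof. by move=> a b; apply: eq_sig_hprop => t p q; exact: Prop_irrelevance. Qed.

Definition preserves_restrictions (zeta : set T) (H : Dpow zeta -> Dpow zeta) :
    Prop :=
  forall (x0 x1 : Dpow zeta) (xi : set T), Xi xi -> xi `<=` zeta ->
    (restr_eq xi x0 x1 <-> restr_eq xi (H x0) (H x1)).

Section Separation.
Variables (zeta : set T) (H : Dpow zeta -> Dpow zeta).
Hypotheses (Xi_zeta : Xi zeta) (H_restr : preserves_restrictions H).

Lemma separating_point_of_not_below (a b : idx zeta) :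
  a <> b -> ~ strict_ext (proj1_sig b) (proj1_sig a) -> exists x, H x a <> H x b.
Proof.
move=> ab ba; apply/existsNP => Hab.
pose xi := downset (proj1_sig a) `|` below (proj1_sig b).
pose xi' := downset (proj1_sig a) `|` downset (proj1_sig b).
have xi'_sub : xi' `<=` zeta.
  by move=> s [] sx; [exact: (downset_sub Xi_zeta (proj2_sig a) sx)
                     | exact: (downset_sub Xi_zeta (proj2_sig b) sx)].
have xi_sub : xi `<=` xi' by move=> s [?|?]; [left | right; right].
have Xi_xi : Xi xi.
  apply: (Xi_sub Xi_zeta (subset_trans xi_sub xi'_sub)).
  by apply: down_closedU; [exact: down_closed_downset | exact: down_closed_below].
have Xi_xi' : Xi xi'.
  apply: (Xi_sub Xi_zeta xi'_sub).
  by apply: down_closedU; exact: down_closed_downset.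
pose x0 : Dpow zeta := fun _ _ => false.
pose x1 : Dpow zeta := fun k _ => `[< k = b >].
have b_xi : ~ xi (proj1_sig b).
  case=> [[/idx_inj ba'|//]|bb]; [exact: ab (esym ba') | exact: strict_ext_irrefl bb].
have x01 : restr_eq xi x0 x1.
  move=> k xik; rewrite /x1; case: asboolP => // kb.
  by case: b_xi; rewrite -kb.
have Hx01 : restr_eq xi (H x0) (H x1).
  exact: (proj1 (H_restr _ _ Xi_xi (subset_trans xi_sub xi'_sub)) x01).
have Hx01' : restr_eq xi' (H x0) (H x1).
  move=> k [xik|[/idx_inj ->|kb]]; first by apply: Hx01; left.
    by rewrite -!Hab; apply: Hx01; left; left.
  by apply: Hx01; right.
have x01' : restr_eq xi' x0 x1 := proj2 (H_restr _ _ Xi_xi' xi'_sub) Hx01'.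
move: (x01' b (or_intror (or_introl erefl))) => /(congr1 (fun c => c 0%N)).
by rewrite /x0 /x1 asboolT.
Qed.

Lemma separating_point (i j : idx zeta) : i <> j -> exists x, H x i <> H x j.
Proof.
move=> ij; have [ji|nji] := pselect (strict_ext (proj1_sig j) (proj1_sig i)).
  have nij : ~ strict_ext (proj1_sig i) (proj1_sig j).
    by move=> ij'; exact: strict_ext_irrefl (strict_ext_trans ij' ji).
  have [x Hx] := separating_point_of_not_below (nesym ij) nij.
  by exists x; exact: nesym Hx.
exact: separating_point_of_not_below.
Qed.

End Separation.

Lemma restr_eq_map_coords (zeta xi : set T)
    (g : idx zeta -> cantor_space -> cantor_space) (y0 y1 : Dpow zeta) :
  (forall k, injective (g k)) ->
  restr_eq xi (map_coords g y0) (map_coords g y1) <-> restr_eq xi y0 y1.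
Proof.
move=> g_inj; split => y01 k xik; last by rewrite /map_coords y01.
exact: g_inj (y01 k xik).
Qed.

Section HomeoImage.
Variables (zeta : set T) (X : set (Dpow zeta)) (H : Dpow zeta -> Dpow zeta).
Hypothesis H_homeo : homeo_onto H X.

Lemma homeo_onto_comp (phi psi : Dpow zeta -> Dpow zeta) :
  continuous phi -> continuous psi -> cancel phi psi ->
  homeo_onto (H \o phi) (H @` range phi).
Proof.
case: H_homeo => Hc [Hinj [HX [G [Gc GH]]]] phic psic phiK.
split; first by move=> y; apply: continuous_comp; [exact: phic | exact: Hc].
split; first by move=> y0 y1 /Hinj /(can_inj phiK).
split; first by rewrite image_comp.
exists (psi \o G); split; last by move=> y /=; rewrite GH phiK.
have GcZ : {within H @` range phi, continuous G}.
  by apply: continuous_subspaceW Gc; rewrite -HX; exact: image_subset.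
move=> z; apply: (@continuous_comp (subspace _) _ _ G psi); first exact: GcZ.
exact: psic.
Qed.

Lemma clopen_in_homeo_image (W : set (Dpow zeta)) :
  clopen W -> clopen_in X (H @` W).
Proof.
case: H_homeo => _ [_ [HX [G [Gc GH]]]] clW.
have HW : H @` W = X `&` G @^-1` W.
  apply/seteqP; split => [_ [w Ww <-]|z [Xz GzW]].
    by split; [rewrite -HX; exists w | rewrite /= GH].
  by move: Xz GzW; rewrite -HX => -[y _ <-]; rewrite /= GH => Wy; exists y.
split; first by rewrite HW; exact: subIsetl.
rewrite HW; apply: clopenI; last exact: preimage_clopen.
by split; [exact: open_subspaceT | exact: closed_subspaceT].
Qed.

End HomeoImage.

Lemma IPS_homeo_image_cylinder (zeta : set T) (X : set (Dpow zeta))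
    (H : Dpow zeta -> Dpow zeta) (F : list (idx zeta)) (m : nat)
    (x : Dpow zeta) :
  homeo_onto H X -> preserves_restrictions H -> IPS (H @` cylinder F m x).
Proof.
move=> H_homeo H_restr; rewrite -range_shift_on.
exists (H \o map_coords (shift_on F m x)); split.
  apply: (homeo_onto_comp H_homeo _ _ (map_coordsK (shift_onK F m x))).
    by apply: continuous_map_coords; exact: continuous_shift_on.
  by apply: continuous_map_coords; exact: continuous_drop_on.
move=> x0 x1 xi Xi_xi xi_sub /=; rewrite -H_restr // restr_eq_map_coords //.
by move=> k; exact: can_inj (shift_onK F m x k).
Qed.

Theorem corollary2p22 (zeta : set T) (X : set (Dpow zeta)) (i j : idx zeta) :
  Xi zeta -> IPS X -> i <> j ->
  exists Z : set (Dpow zeta),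
    IPS Z /\ Z `<=` X /\ clopen_in X Z /\
    [set z i | z in Z] `&` [set z j | z in Z] = set0.
Proof.
move=> Xi_zeta [H [H_homeo H_restr]] ij.
have [Hc [_ [HX _]]] := H_homeo.
have [x Hx] := separating_point Xi_zeta H_restr ij.
have [n Hxn] : exists n, H x i n <> H x j n.
  by apply/existsNP => Hxij; apply: Hx; exact/funext.
have near_bit k : \forall y \near x, H y k n = H x k n.
  exact: (continuous_comp (Hc x) (continuous_bit k n (H x))) _ (discrete_set1 _).
have [F [m cyl_sub]] := nbhs_cylinder (filterI (near_bit i) (near_bit j)).
exists (H @` cylinder F m x); split; last split; last split.
- exact: IPS_homeo_image_cylinder H_homeo H_restr.
- by rewrite -HX; exact: image_subset.
- exact/(clopen_in_homeo_image H_homeo)/cylinder_clopen.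
- apply/seteqP; split => // c [[_ [y1 y1F <-] <-] [_ [y2 y2F <-] Hy21]].
  have [Hy1i _] := cyl_sub _ y1F; have [_ Hy2j] := cyl_sub _ y2F.
  by apply: Hxn; rewrite -Hy1i -Hy2j Hy21.
Qed.
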